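(* There is a context-free language $L$ such that ${\rm pssr}(L)$ is not context-free; for instance $L=\{0^m1^m2^n3^n : m,n\ge1\}$.
   Context: For words $x=a_1\cdots a_n$, $y=b_1\cdots b_n$ of the same length, the perfect shuffle is $x\,\text{sh}\,y=a_1b_1a_2b_2\cdots a_nb_n$. $x^R$ denotes the reversal of $x$. For a language $L$, ${\rm pssr}(L)=\{x\,\text{sh}\,x^R : x\in L\}$. *)

From Stdlib Require Import Relations List.
From mathcomp Require Import all_boot.
Set Implicit Arguments. Unset Strict Implicit. Unset Printing Implicit Defensive.

Definition language (T : Type) := seq T -> Prop.

Record cfg (T : Type) := CFG {
  nonterm : Type;
  start : nonterm;
  rules : seq (nonterm * seq (nonterm + T))
}.

Definition cfg_step (T : Type) (G : cfg T) (u v : seq (nonterm G + T)) : Prop :=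
  exists (l r : seq (nonterm G + T)) (A : nonterm G) (rhs : seq (nonterm G + T)),
    List.In (A, rhs) (rules G) /\ u = l ++ inl A :: r /\ v = l ++ rhs ++ r.

Definition cfg_derives (T : Type) (G : cfg T) :=
  clos_refl_trans _ (@cfg_step T G).

Definition cfg_lang (T : Type) (G : cfg T) : language T :=
  fun w => @cfg_derives T G [:: inl (start G)] (map inr w).

Definition context_free (T : Type) (L : language T) : Prop :=
  exists G : cfg T, forall w, L w <-> cfg_lang G w.

Definition perfect_shuffle (T : Type) (x y : seq T) : seq T :=
  flatten (map (fun p => [:: p.1; p.2]) (zip x y)).

Definition pssr (T : Type) (L : language T) : language T :=
  fun w => exists x, L x /\ w = perfect_shuffle x (rev x).

Definition L0 : language nat :=
  fun w => exists m n, 1 <= m /\ 1 <= n /\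
    w = nseq m 0 ++ nseq m 1 ++ nseq n 2 ++ nseq n 3.

From Pilot Require Import Defs.
From Stdlib Require Import Relations List Classical.
From mathcomp Require Import all_boot zify.
Set Implicit Arguments. Unset Strict Implicit. Unset Printing Implicit Defensive.

(* Derivations of a grammar are handled through parse trees: [der G n s w]
   says that s is the root of a parse tree of height <= n with yield w, and
   [cfg_lang_derivable] identifies the rewriting semantics of Defs with it.
   1. L0 is generated by S -> A B, A -> 0 A 1 | 0 1, B -> 2 B 3 | 2 3.
   2. A pumping lemma for arbitrary grammars (unit and empty rules allowed):
      descending in a parse tree along largest children and counting only
      branching nodes, a long yield forces a repeated nonterminal at two
      branching nodes, which lets a nonempty part v, y be cut out of the
      word, with |vxy| bounded.
   3. Words of pssr(L0) are palindromes.  Cutting out a short middle part of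
      z = x sh x^R, x = 0^P 1^P 2^P 3^P, keeps a prefix (0^P) sh (3^P); this
      forces the witness of the shorter word to have length >= |x|. *)

Arguments cfg_step {T} G u v.
Arguments cfg_derives {T} G _ _.
Arguments cfg_lang {T} G w.

(* With P the derivation relation of a grammar this says that a
   sentential form derives w, one subtree per symbol. *)
Inductive cat_rel (S T : Type) (P : S -> seq T -> Prop) : seq S -> seq T -> Prop :=
| cat_rel_nil : cat_rel P [::] [::]
| cat_rel_cons s ss w1 w2 :
    P s w1 -> cat_rel P ss w2 -> cat_rel P (s :: ss) (w1 ++ w2).

Section CatRel.
Variables (S T : Type).
Implicit Types (P Q : S -> seq T -> Prop) (ss : seq S).

Lemma cat_rel_mono P Q ss w :
  (forall s v, P s v -> Q s v) -> cat_rel P ss w -> cat_rel Q ss w.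
Proof.
move=> PQ; elim=> [|s ss' w1 w2 H1 _ IH]; first exact: cat_rel_nil.
exact: cat_rel_cons (PQ _ _ H1) IH.
Qed.

Lemma cat_rel_cat P ss1 ss2 w1 w2 :
  cat_rel P ss1 w1 -> cat_rel P ss2 w2 -> cat_rel P (ss1 ++ ss2) (w1 ++ w2).
Proof.
elim=> [|s ss u1 u2 H1 _ IH] //= H2.
by rewrite -catA; apply: cat_rel_cons H1 (IH H2).
Qed.

Lemma cat_rel_nil_inv P w : cat_rel P [::] w -> w = [::].
Proof. by move=> H; inversion H. Qed.

Lemma cat_rel_cons_inv P s ss w : cat_rel P (s :: ss) w ->
  exists w1 w2, w = w1 ++ w2 /\ P s w1 /\ cat_rel P ss w2.
Proof. by move=> H; inversion H; subst; exists w1, w2. Qed.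

Lemma cat_rel_cat_inv P ss1 ss2 w : cat_rel P (ss1 ++ ss2) w ->
  exists w1 w2, w = w1 ++ w2 /\ cat_rel P ss1 w1 /\ cat_rel P ss2 w2.
Proof.
elim: ss1 w => [|s ss1 IH] w /= H.
  by exists [::], w; split; [|split; [exact: cat_rel_nil|]].
have [w1 [w2 [-> [H1 /IH [u1 [u2 [-> [Hu1 Hu2]]]]]]]] := cat_rel_cons_inv H.
exists (w1 ++ u1), u2; split; first by rewrite catA.
by split=> //; apply: cat_rel_cons.
Qed.

(* Some factor w_i is at least a 1/k share of w: the pumping argument always
   descends into such a largest child. *)
Lemma cat_rel_largest P ss w : cat_rel P ss w -> 0 < size ss ->
  exists ssl s ssr wl wi wr, ss = ssl ++ s :: ssr /\ w = wl ++ wi ++ wr /\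
    cat_rel P ssl wl /\ P s wi /\ cat_rel P ssr wr /\ size w <= size ss * size wi.
Proof.
elim=> [//|s ss0 w1 w2 H1 H2 IH] _.
case: ss0 H2 IH => [|s' ss'] H2 IH.
  rewrite (cat_rel_nil_inv H2).
  exists [::], s, [::], [::], w1, [::]; rewrite /= !cats0 mul1n.
  by repeat split=> //; exact: cat_rel_nil.
have [ssl [s0 [ssr [wl [wi [wr [Ess [Ew [Hl [Hi [Hr Hs]]]]]]]]]]] := IH isT.
case: (leqP (size wi) (size w1)) => Hc.
  exists [::], s, (s' :: ss'), [::], w1, w2.
  do 5 (split; first by [|exact: cat_rel_nil]).
  move: Hs; rewrite /= size_cat; set k := size ss'; nia.
exists (s :: ssl), s0, ssr, (w1 ++ wl), wi, wr.
split; first by rewrite Ess.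
split; first by rewrite Ew !catA.
do 3 (split; first by [|exact: cat_rel_cons]).
move: Hs; rewrite /= size_cat; set k := size ss'; nia.
Qed.

End CatRel.

Section Derivations.
Variables (T : Type) (G : cfg T).
Local Notation symbol := (nonterm G + T)%type.

(* der n s w : the symbol s is the root of a parse tree of height at most n
   with yield w.  The height index provides the induction measure for the
   descent along parse trees. *)
Fixpoint der (n : nat) (s : symbol) (w : seq T) : Prop :=
  match n with
  | 0 => exists t, s = inr t /\ w = [:: t]
  | n'.+1 => (exists t, s = inr t /\ w = [:: t]) \/
      exists A rhs, s = inl A /\ List.In (A, rhs) (rules G) /\ cat_rel (der n') rhs w
  end.

Definition derivable (s : symbol) (w : seq T) : Prop := exists n, der n s w.

Lemma der_succ n s w : der n s w -> der n.+1 s w.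
Proof.
elim: n s w => [|n IH] s w /=; first by left.
case=> [Ht|[A [rhs [-> [Hin H]]]]]; first by left.
by right; exists A, rhs; split=> //; split=> //; apply: cat_rel_mono IH H.
Qed.

Lemma der_le n m s w : n <= m -> der n s w -> der m s w.
Proof.
move=> /subnKC <-; elim: (m - n) => [|k IH] H; first by rewrite addn0.
by rewrite addnS; apply/der_succ/IH.
Qed.

Lemma der_inl_inv n A w : der n (inl A) w ->
  exists n' rhs, n = n'.+1 /\ List.In (A, rhs) (rules G) /\ cat_rel (der n') rhs w.
Proof.
case: n => [|n] /=; first by case=> t [].
by case=> [[t []] //|[A' [rhs [[<-] [Hin H]]]]]; exists n, rhs.
Qed.

Lemma der_inr_inv n t w : der n (inr t) w -> w = [:: t].
Proof.
case: n => [|n] /=; first by case=> t' [[->]].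
by case=> [[t' [[->]]]|[A [rhs [] //]]].
Qed.

Lemma der_inr n t : der n (inr t) [:: t].
Proof. by case: n => [|n] /=; [exists t | left; exists t]. Qed.

Lemma derivable_inr t : derivable (inr t) [:: t].
Proof. by exists 0; exact: der_inr. Qed.

Lemma cat_rel_derivable ss w : cat_rel derivable ss w -> exists n, cat_rel (der n) ss w.
Proof.
elim=> [|s ss' w1 w2 [n1 H1] _ [n2 H2]]; first by exists 0; exact: cat_rel_nil.
exists (maxn n1 n2); apply: cat_rel_cons; first exact: der_le (leq_maxl _ _) H1.
by apply: cat_rel_mono H2 => s' v; apply: der_le (leq_maxr _ _).
Qed.

Lemma derivable_rule A rhs w : List.In (A, rhs) (rules G) ->
  cat_rel derivable rhs w -> derivable (inl A) w.
Proof.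
by move=> Hin /cat_rel_derivable [n Hn]; exists n.+1; right; exists A, rhs.
Qed.

(* Parse trees are stable under reverse rewriting steps, so every rewriting
   derivation yields a parse tree ... *)
Lemma step_der u v w n : cfg_step G u v ->
  cat_rel (der n) v w -> cat_rel (der n.+1) u w.
Proof.
move=> [l [r [A [rhs [Hin [-> ->]]]]]] /cat_rel_cat_inv [w1 [w23 [-> [H1 H23]]]].
have [w2 [w3 [-> [H2 H3]]]] := cat_rel_cat_inv H23.
apply: cat_rel_cat; first exact: cat_rel_mono (@der_succ n) H1.
apply: cat_rel_cons; last exact: cat_rel_mono (@der_succ n) H3.
by right; exists A, rhs.
Qed.

Lemma derives_der u v : cfg_derives G u v ->
  forall w, (exists n, cat_rel (der n) v w) -> exists n, cat_rel (der n) u w.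
Proof.
elim=> {u v} [u v Hs|u|u v z _ IH1 _ IH2] w; last 1 first.
- by move=> Hw; apply/IH1/IH2.
- by move=> [n Hn]; exists n.+1; exact: step_der Hs Hn.
- by [].
Qed.

(* ... and conversely every parse tree unfolds into a rewriting derivation,
   rewriting being compatible with left and right contexts. *)
Lemma derives_ctx l r u v : cfg_derives G u v ->
  cfg_derives G (l ++ u ++ r) (l ++ v ++ r).
Proof.
elim=> {u v} [u v [l' [r' [A [rhs [Hin [-> ->]]]]]]|u|u v z _ IH1 _ IH2].
- by apply: rt_step; exists (l ++ l'), (r' ++ r), A, rhs; rewrite -!catA.
- exact: rt_refl.
- exact: rt_trans IH1 IH2.
Qed.

Lemma derives_cat a a' b b' : cfg_derives G a a' -> cfg_derives G b b' ->
  cfg_derives G (a ++ b) (a' ++ b').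
Proof.
move=> Ha Hb; apply: rt_trans (derives_ctx [::] b Ha) _.
by have := derives_ctx a' [::] Hb; rewrite !cats0.
Qed.

Lemma der_derives n s w : der n s w -> cfg_derives G [:: s] (map inr w).
Proof.
elim: n s w => [|n IH] s w /=; first by case=> t [-> ->]; exact: rt_refl.
case=> [[t [-> ->]]|[A [rhs [-> [Hin H]]]]]; first exact: rt_refl.
apply: (@rt_trans _ _ _ rhs).
  by apply: rt_step; exists [::], [::], A, rhs; rewrite cats0.
elim: H => [|s1 ss1 w1 w2 H1 _ IH2]; first exact: rt_refl.
by rewrite map_cat; apply: (derives_cat (a := [:: s1])) IH2; apply: IH.
Qed.

Lemma cat_rel_inr_inv n t ss w : cat_rel (der n) (inr t :: ss) w ->
  exists w', w = t :: w' /\ cat_rel (der n) ss w'.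
Proof.
move=> H; have [w1 [w' [Ew [H1 H']]]] := cat_rel_cons_inv H.
by exists w'; rewrite Ew (der_inr_inv H1).
Qed.

Lemma cfg_lang_derivable w : cfg_lang G w <-> derivable (inl (start G)) w.
Proof.
split=> [Hw|[n Hn]]; last exact: der_derives Hn.
have Hterm : cat_rel (der 0) (map inr w) w.
  elim: w {Hw} => [|t w IH] /=; first exact: cat_rel_nil.
  by apply: (cat_rel_cons (w1 := [:: t])) IH; exact: der_inr.
have [n Hn] := derives_der Hw (ex_intro _ 0 Hterm).
have [w1 [w2 [-> [H1 /cat_rel_nil_inv ->]]]] := cat_rel_cons_inv Hn.
by rewrite cats0; exists n.
Qed.

End Derivations.

Arguments der {T} G n s w.
Arguments derivable {T} G s w.

Lemma nseqSr (T : Type) n (b : T) : nseq n.+1 b = nseq n b ++ [:: b].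
Proof. by rewrite -addn1 nseqD. Qed.

Section MatchedBlock.
Variables (T : Type) (G : cfg T) (A : nonterm G) (a c : T).

Lemma matched_block_complete :
  List.In (A, [:: inr a; inl A; inr c]) (rules G) -> List.In (A, [:: inr a; inr c]) (rules G) ->
  forall m, derivable G (inl A) (nseq m.+1 a ++ nseq m.+1 c).
Proof.
move=> Hrec Hbase; elim=> [|m IH].
  apply: derivable_rule Hbase _.
  apply: (cat_rel_cons (w1 := [:: a])); first exact: derivable_inr.
  apply: (cat_rel_cons (w1 := [:: c]) (w2 := [::])); first exact: derivable_inr.
  exact: cat_rel_nil.
have -> : nseq m.+2 a ++ nseq m.+2 c = [:: a] ++ (nseq m.+1 a ++ nseq m.+1 c) ++ [:: c] ++ [::].
  by rewrite cats0 /= -catA -(nseqSr m.+1 c).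
apply: derivable_rule Hrec _; apply: cat_rel_cons; first exact: derivable_inr.
apply: cat_rel_cons IH _; apply: cat_rel_cons; [exact: derivable_inr | exact: cat_rel_nil].
Qed.

Lemma matched_block_sound :
  (forall rhs, List.In (A, rhs) (rules G) ->
     rhs = [:: inr a; inl A; inr c] \/ rhs = [:: inr a; inr c]) ->
  forall n w, der G n (inl A) w -> exists m, w = nseq m.+1 a ++ nseq m.+1 c.
Proof.
move=> Hrules; elim=> [|n IH] w /der_inl_inv [n' [rhs [En [Hin H]]]] //.
have {}En : n' = n by case: En.
subst n'; case: (Hrules _ Hin) => Erhs; subst rhs.
- have [w1 [-> H1]] := cat_rel_inr_inv H.
  have [w2 [w3 [-> [H2 H3]]]] := cat_rel_cons_inv H1.
  have [w4 [-> H4]] := cat_rel_inr_inv H3.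
  rewrite (cat_rel_nil_inv H4); have [m ->] := IH _ H2.
  by exists m.+1; rewrite (nseqSr m.+1 c) -!catA.
- have [w1 [-> H1]] := cat_rel_inr_inv H.
  have [w2 [-> H2]] := cat_rel_inr_inv H1.
  by rewrite (cat_rel_nil_inv H2); exists 0.
Qed.

End MatchedBlock.

(* The grammar S -> A B, A -> 0 A 1 | 0 1, B -> 2 B 3 | 2 3 for L0. *)
Definition L0_grammar : cfg nat := @CFG nat nat 0
  [:: (0, [:: inl 1; inl 2]);
      (1, [:: inr 0; inl 1; inr 1]); (1, [:: inr 0; inr 1]);
      (2, [:: inr 2; inl 2; inr 3]); (2, [:: inr 2; inr 3])].

Lemma cf_L0 : context_free L0.
Proof.
exists L0_grammar => w; rewrite cfg_lang_derivable; split.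
  case=> m [n [Hm [Hn ->]]]; case: m Hm => // m _; case: n Hn => // n _.
  apply: (@derivable_rule _ L0_grammar 0 [:: inl 1; inl 2]); first by left.
  rewrite catA -(cats0 (nseq n.+1 2 ++ _)).
  apply: cat_rel_cons; first by apply: matched_block_complete; simpl; tauto.
  by apply: cat_rel_cons; [apply: matched_block_complete; simpl; tauto | exact: cat_rel_nil].
case=> k /der_inl_inv [n [rhs [_ [Hin H]]]].
have Erhs : rhs = [:: inl 1; inl 2] by case: Hin => [[]|[[]|[[]|[[]|[[]|[]]]]]].
subst rhs; have [w1 [w2 [-> [H1 H']]]] := cat_rel_cons_inv H.
have [w3 [w4 [-> [H2 /cat_rel_nil_inv ->]]]] := cat_rel_cons_inv H'.
have rules1 rhs : List.In ((1 : nonterm L0_grammar), rhs) (rules L0_grammar) ->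
    rhs = [:: inr 0; inl 1; inr 1] \/ rhs = [:: inr 0; inr 1].
  by case=> [[]|[[<-]|[[<-]|[[]|[[]|[]]]]]]; auto.
have rules2 rhs : List.In ((2 : nonterm L0_grammar), rhs) (rules L0_grammar) ->
    rhs = [:: inr 2; inl 2; inr 3] \/ rhs = [:: inr 2; inr 3].
  by case=> [[]|[[]|[[]|[[<-]|[[<-]|[]]]]]]; auto.
have [m ->] := matched_block_sound rules1 H1.
have [n' ->] := matched_block_sound rules2 H2.
by exists m.+1, n'.+1; rewrite cats0 -!catA.
Qed.

(* Unit
   and empty productions are allowed, so the descent only counts branching
   nodes, i.e. nodes whose largest child does not carry the whole yield. *)

Section Pumping.
Variables (T : Type) (G : cfg T).
Local Notation symbol := (nonterm G + T)%type.

Definition rhs_bound : nat := foldr (fun r acc => maxn (size r.2) acc) 1 (rules G).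

Definition lhs_list : list (nonterm G) := List.map fst (rules G).

Lemma rhs_bound_gt0 : 0 < rhs_bound.
Proof. by rewrite /rhs_bound; elim: (rules G) => //= r rs IH; rewrite leq_max IH orbT. Qed.

Lemma rule_size_le A rhs : List.In (A, rhs) (rules G) -> size rhs <= rhs_bound.
Proof.
rewrite /rhs_bound; elim: (rules G) => //= r rs IH [->|H]; first by rewrite leq_max leqnn.
by rewrite leq_max IH ?orbT.
Qed.

Lemma rule_lhs A rhs : List.In (A, rhs) (rules G) -> List.In A lhs_list.
Proof. exact: (in_map fst). Qed.

Definition frame (A : nonterm G) (s : symbol) (u z : seq T) : Prop :=
  forall t, derivable G s t -> derivable G (inl A) (u ++ t ++ z).

Lemma frame_refl A : frame A (inl A) [::] [::].
Proof. by move=> t; rewrite cats0. Qed.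

Lemma frame_trans A B s u z u' z' :
  frame A (inl B) u z -> frame B s u' z' -> frame A s (u ++ u') (z' ++ z).
Proof. by move=> HA HB t /HB /HA; rewrite -!catA. Qed.

Lemma frame_rule n A ssl s ssr wl wr : List.In (A, ssl ++ s :: ssr) (rules G) ->
  cat_rel (der G n) ssl wl -> cat_rel (der G n) ssr wr -> frame A s wl wr.
Proof.
move=> Hin Hl Hr t Ht; apply: derivable_rule Hin _.
have lift ss v : cat_rel (der G n) ss v -> cat_rel (derivable G) ss v.
  by apply: cat_rel_mono => s' v' H; exists n.
by apply: cat_rel_cat (lift _ _ Hl) (cat_rel_cons Ht (lift _ _ Hr)).
Qed.

Lemma descend n A w : der G n.+1 (inl A) w -> 0 < size w ->
  exists s wl wi wr, w = wl ++ wi ++ wr /\ der G n s wi /\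
    size w <= rhs_bound * size wi /\ List.In A lhs_list /\ frame A s wl wr.
Proof.
move=> /der_inl_inv [_ [rhs [[<-] [Hin H]]]] Hw.
have Hrhs : 0 < size rhs.
  by case: rhs Hin H => // _ /cat_rel_nil_inv Ew; rewrite Ew in Hw.
have [ssl [s [ssr [wl [wi [wr [Erhs [-> [Hl [Hi [Hr Hs]]]]]]]]]]] :=
  cat_rel_largest H Hrhs.
exists s, wl, wi, wr; do 2 (split=> //); split.
  exact: leq_trans Hs (leq_mul (rule_size_le Hin) (leqnn _)).
by split; [exact: rule_lhs Hin | rewrite Erhs in Hin; exact: frame_rule Hin Hl Hr].
Qed.

Lemma der_long_inl n s w : der G n s w -> 1 < size w -> exists A, s = inl A.
Proof. by case: s => [A|t] H; [exists A | rewrite (der_inr_inv H)]. Qed.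

Definition occurs (A B : nonterm G) (w : seq T) : Prop :=
  exists u x z, w = u ++ x ++ z /\ frame A (inl B) u z /\ derivable G (inl B) x.

Definition pumpable (A : nonterm G) (w : seq T) : Prop :=
  exists u v x y z, w = u ++ v ++ x ++ y ++ z /\ v ++ y <> [::] /\
    derivable G (inl A) (u ++ x ++ z).

Lemma occurs_self n A w : der G n (inl A) w -> occurs A A w.
Proof.
by move=> H; exists [::], w, [::]; rewrite cats0; split=> //; split; [exact: frame_refl|exists n].
Qed.

Lemma occurs_frame A A' B wl w wr :
  frame A (inl A') wl wr -> occurs A' B w -> occurs A B (wl ++ w ++ wr).
Proof.
move=> HA [u [x [z [-> [HB Hx]]]]]; exists (wl ++ u), x, (z ++ wr).
by split; [rewrite -!catA | split=> //; exact: frame_trans HA HB].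
Qed.

Lemma pumpable_frame A A' wl w wr :
  frame A (inl A') wl wr -> pumpable A' w -> pumpable A (wl ++ w ++ wr).
Proof.
move=> HA [u [v [x [y [z [-> [Hvy Hd]]]]]]]; exists (wl ++ u), v, x, y, (z ++ wr).
by split; [rewrite -!catA | split=> //; have := HA _ Hd; rewrite -!catA].
Qed.

Lemma pumpable_repeat A A' wl w wr : wl ++ wr <> [::] ->
  frame A (inl A') wl wr -> occurs A' A w -> pumpable A (wl ++ w ++ wr).
Proof.
move=> Hne HA [u [x [z [-> [HB Hx]]]]]; exists [::], (wl ++ u), x, (z ++ wr), [::].
split; first by rewrite cats0 -!catA.
split; last by rewrite cats0.
move/(congr1 size); rewrite !size_cat /= => E.
by apply: Hne; apply/nilP; rewrite /nilp size_cat; lia.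
Qed.

Lemma branching_chain n : forall A w j, der G n (inl A) w -> rhs_bound ^ j < size w ->
  exists Bs, length Bs = j.+1 /\ incl Bs lhs_list /\
    (forall B, List.In B Bs -> occurs A B w) /\ (NoDup Bs \/ pumpable A w).
Proof.
elim: n => [|n IH] A w j Hd Hw; first by case: Hd => t [].
have Hbj : 0 < rhs_bound ^ j by rewrite expn_gt0 rhs_bound_gt0.
have [s [wl [wi [wr [Ew [Hi [Hs [HA Hfr]]]]]]]] := descend Hd (ltn_trans Hbj Hw).
have Hsize : size w = size wl + size wi + size wr by rewrite Ew !size_cat addnA.
case Eb: (wl ++ wr) => [|c cs].
  have Hwi : rhs_bound ^ j < size wi.
    by move: Eb => /(congr1 size); rewrite size_cat /=; lia.
  have [A' Es] := der_long_inl Hi (leq_ltn_trans Hbj Hwi).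
  rewrite {}Es in Hi Hfr.
  have [Bs [Hlen [Hinc [Hocc Hnd]]]] := IH A' wi j Hi Hwi.
  exists Bs; split=> //; split=> //; rewrite Ew; split.
    by move=> B /Hocc; apply: occurs_frame Hfr.
  by case: Hnd => [|/(pumpable_frame Hfr)]; [left|right].
have Hne : wl ++ wr <> [::] by rewrite Eb.
case: j Hw Hbj => [|j] Hw Hbj.
  exists [:: A]; split=> //; split; first by move=> B [<-|[]].
  by split; [move=> B [<-|[]]; exact: occurs_self Hd | left; constructor; [|constructor]].
have Hwi : rhs_bound ^ j < size wi.
  by rewrite -(ltn_pmul2l rhs_bound_gt0) -expnS; exact: leq_trans Hw Hs.
have Hj : 0 < rhs_bound ^ j by rewrite expn_gt0 rhs_bound_gt0.
have [A' Es] := der_long_inl Hi (leq_ltn_trans Hj Hwi).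
rewrite {}Es in Hi Hfr.
have [Bs [Hlen [Hinc [Hocc Hnd]]]] := IH A' wi j Hi Hwi.
exists (A :: Bs); split; first by rewrite /= Hlen.
split; first exact: incl_cons.
split.
  move=> B [<-|/Hocc]; first exact: occurs_self Hd.
  by rewrite Ew; apply: occurs_frame Hfr.
case: Hnd => [Hnd|Hp]; last by right; rewrite Ew; exact: pumpable_frame Hfr Hp.
case: (classic (List.In A Bs)) => [/Hocc HAocc|HnA]; last by left; constructor.
by right; rewrite Ew; exact: pumpable_repeat Hne Hfr HAocc.
Qed.

Lemma window n : forall A w, der G n (inl A) w ->
  rhs_bound ^ length lhs_list < size w ->
  exists B u w' z n', w = u ++ w' ++ z /\ frame A (inl B) u z /\ der G n' (inl B) w' /\
    rhs_bound ^ length lhs_list < size w' <= rhs_bound ^ (length lhs_list).+1.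
Proof.
set K := length lhs_list.
elim: n => [|n IH] A w Hd Hw; first by case: Hd => t [].
have HbK : 0 < rhs_bound ^ K by rewrite expn_gt0 rhs_bound_gt0.
have [s [wl [wi [wr [Ew [Hi [Hs [_ Hfr]]]]]]]] := descend Hd (ltn_trans HbK Hw).
case: (leqP (size wi) (rhs_bound ^ K)) => Hwi.
  exists A, [::], w, [::], n.+1; rewrite cats0; do 2 (split=> //); first exact: frame_refl.
  by rewrite Hw expnS (leq_trans Hs) // leq_mul2l Hwi orbT.
have [A' Es] := der_long_inl Hi (leq_ltn_trans HbK Hwi).
rewrite {}Es in Hi Hfr.
have [B [u [w' [z [n' [Ewi [HB Hw']]]]]]] := IH A' wi Hi Hwi.
exists B, (wl ++ u), w', (z ++ wr), n'; split; first by rewrite Ew Ewi -!catA.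
by split=> //; exact: frame_trans Hfr HB.
Qed.

(* In the window subtree the chain
   of K + 1 branching labels cannot be duplicate-free. *)
Theorem cfg_pumping : exists p, forall w, cfg_lang G w -> p < size w ->
  exists u v x y z, w = u ++ v ++ x ++ y ++ z /\ v ++ y <> [::] /\
    size (v ++ x ++ y) <= p /\ cfg_lang G (u ++ x ++ z).
Proof.
set K := length lhs_list.
exists (rhs_bound ^ K.+1) => w /cfg_lang_derivable [n Hd] Hw.
have HK : rhs_bound ^ K < size w.
  exact: leq_ltn_trans (leq_pexp2l rhs_bound_gt0 (leqnSn _)) Hw.
have [B [u [w' [z [n' [-> [Hfr [HB /andP[Hlow Hup]]]]]]]]] := window Hd HK.
have [Bs [Hlen [Hinc [_ [Hnd|Hp]]]]] := branching_chain HB Hlow.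
  by have := NoDup_incl_length Hnd Hinc; rewrite Hlen; lia.
have [u1 [v [x [y [z1 [Ew' [Hvy Hd']]]]]]] := Hp.
exists (u ++ u1), v, x, y, (z1 ++ z); split; first by rewrite Ew' -!catA.
split=> //; split.
  by apply: leq_trans Hup; rewrite Ew' !size_cat; lia.
by apply/cfg_lang_derivable; have := Hfr _ Hd'; rewrite -!catA.
Qed.

End Pumping.

Section Shuffle.
Variable T : Type.
Implicit Types x y : seq T.
Local Notation sh := perfect_shuffle.

Lemma shuffle_cons a b x y : sh (a :: x) (b :: y) = a :: b :: sh x y.
Proof. by []. Qed.

Lemma size_shuffle x y : size x = size y -> size (sh x y) = size x + size y.
Proof. by elim: x y => [|a x IH] [|b y] //= [E]; rewrite IH //; lia. Qed.

Lemma take_shuffle k x y : size x = size y ->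
  take k.*2 (sh x y) = sh (take k x) (take k y).
Proof. by elim: k x y => [|k IH] [|a x] [|b y] //= [E]; rewrite IH. Qed.

Lemma shuffle_inj x y x' y' : size x = size y -> size x' = size y' ->
  sh x y = sh x' y' -> x = x' /\ y = y'.
Proof.
elim: x y x' y' => [|a x IH] [|b y] [|a' x'] [|b' y'] //= [E] [E'] [-> -> H].
by have [-> ->] := IH _ _ _ E E' H.
Qed.

Lemma take_shuffle_eq k x y x' y' : size x = size y -> size x' = size y' ->
  take k.*2 (sh x y) = take k.*2 (sh x' y') -> take k x = take k x' /\ take k y = take k y'.
Proof.
move=> E E'; rewrite !take_shuffle //; apply: shuffle_inj; by rewrite !size_take ?E ?E'.
Qed.

Lemma shuffle_rcons x y a b : size x = size y ->
  sh (rcons x a) (rcons y b) = rcons (rcons (sh x y) a) b.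
Proof. by elim: x y => [|c x IH] [|d y] // [E]; rewrite !rcons_cons !shuffle_cons IH. Qed.

Lemma rev_shuffle x y : size x = size y -> rev (sh x y) = sh (rev y) (rev x).
Proof.
elim: x y => [|a x IH] [|b y] //= [E].
by rewrite !rev_cons IH // shuffle_rcons // !size_rev.
Qed.

Lemma pssr_palindrome (L : language T) w : pssr L w -> rev w = w.
Proof. by case=> x [_ ->]; rewrite rev_shuffle ?revK // size_rev. Qed.

End Shuffle.

(* Two palindromes differing only in a middle segment have the same prefix of
   length k as soon as the common outer part u or w has length at least k
   (for w, read both words backwards). *)
Lemma palindrome_common_prefix (T : Type) (z z' u m m' w : seq T) k :
  rev z = z -> rev z' = z' -> z = u ++ m ++ w -> z' = u ++ m' ++ w ->
  k <= size u \/ k <= size w -> take k z' = take k z.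
Proof.
move=> Pz Pz' Ez Ez' [Hk|Hk]; first by rewrite Ez Ez' !takel_cat.
by rewrite -Pz -Pz' Ez Ez' !rev_cat -!catA !takel_cat ?size_rev.
Qed.

Lemma count_take (T : eqType) (a : pred T) k (s : seq T) : count a (take k s) <= count a s.
Proof. by rewrite -{2}(cat_take_drop k s) count_cat leq_addr. Qed.

Lemma L0_long_prefixes x k : L0 x ->
  take k x = nseq k 0 -> take k (rev x) = nseq k 3 -> k * 4 <= size x.
Proof.
case=> m [n [_ [_ Ex]]] H0 H3.
have Hm : k <= m.
  by have := count_take (pred1 0) k x; rewrite H0 Ex !count_cat !count_nseq /=; lia.
have Hn : k <= n.
  have := count_take (pred1 3) k (rev x).
  by rewrite H3 count_rev Ex !count_cat !count_nseq /=; lia.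
by rewrite Ex !size_cat !size_nseq; lia.
Qed.

(* Pump down z = x sh x^R for x = 0^P 1^P 2^P 3^P, P > p.  The pumped word is
   a shorter word x' sh x'^R of pssr(L0) which, being a palindrome like z,
   still begins with 2P letters of z, i.e. with (0^P) sh (3^P).  Hence x'
   begins with 0^P and ends with 3^P, so |x'| >= 4P = |x|: a contradiction. *)
Lemma not_cf_pssr_L0 : ~ context_free (pssr L0).
Proof.
move=> [G HG].
have [p pumpG] := cfg_pumping G.
set P := p.+1.
set x := nseq P 0 ++ nseq P 1 ++ nseq P 2 ++ nseq P 3.
set z := perfect_shuffle x (rev x).
have Hrx : size x = size (rev x) by rewrite size_rev.
have Hx : size x = P * 4 by rewrite !size_cat !size_nseq; lia.
have Hz : size z = P * 8 by rewrite size_shuffle // -Hrx Hx; lia.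
have Lz : pssr L0 z by exists x; split=> //; exists P, P.
have [u [v [y [t [w [Ez [Hvt [Hvyt Hz']]]]]]]] := pumpG z (proj1 (HG z) Lz) ltac:(rewrite Hz; lia).
have [x' [Lx' Ez']] := proj2 (HG _) Hz'.
have Hrx' : size x' = size (rev x') by rewrite size_rev.
have Hpre : take P.*2 (u ++ y ++ w) = take P.*2 z.
  apply: (palindrome_common_prefix (m := v ++ y ++ t)).
  - exact: pssr_palindrome Lz.
  - by rewrite Ez'; apply: (pssr_palindrome (L := L0)); exists x'.
  - by rewrite Ez -!catA.
  - by [].
  - by move: Hz Hvyt; rewrite Ez !size_cat; lia.
rewrite Ez' in Hpre.
have [H0 H3] := take_shuffle_eq Hrx' Hrx Hpre.
have Hx0 : take P x = nseq P 0 by rewrite takel_cat ?size_nseq // take_oversize ?size_nseq.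
have Hx3 : take P (rev x) = nseq P 3.
  by rewrite !rev_cat !rev_nseq -!catA takel_cat ?size_nseq // take_oversize ?size_nseq.
have := L0_long_prefixes Lx' (etrans H0 Hx0) (etrans H3 Hx3).
have : size (u ++ y ++ w) = size x' + size (rev x') by rewrite Ez' size_shuffle.
have : size z = size (u ++ y ++ w) + size (v ++ t) by rewrite Ez !size_cat; lia.
have : 0 < size (v ++ t) by case: (v ++ t) Hvt.
by rewrite Hz -Hrx'; lia.
Qed.

Theorem mainTheorem7 :
  (exists L : language nat, context_free L /\ ~ context_free (pssr L)) /\
  (context_free L0 /\ ~ context_free (pssr L0)).
Proof.
have cfL0 := cf_L0; have ncfL0 := not_cf_pssr_L0.
by split; [exists L0 | split].
Qed.
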